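(* Let $X,Y$ be Banach spaces and let $T(t):X\to X$ and $S(-t):Y\to Y$, $t\ge0$, be $C_0$ semigroups with $|T(t)|\le e^{\mu_st}$ and $|S(-t)|\le e^{-\mu_ut}$ for $t\ge0$. Equip $X\times Y$ with the max norm $|(x,y)|=\max\{|x|,|y|\}$ and let $B_1:X\times Y\to X$, $B_2:X\times Y\to Y$ be Lipschitz with $\mathrm{Lip}\,B_i\le\varepsilon$. Let $H$ be the continuous correspondence induced by $x(t)=T(t-t_1)x_1+\int_{t_1}^tT(t-s)B_1(x(s),y(s))\,ds$, $y(t)=S(t-t_2)y_2-\int_t^{t_2}S(t-s)B_2(x(s),y(s))\,ds$, $t_1\le t\le t_2$ (see context). Assume $\mu_u-\mu_s-2\varepsilon>0$. Take $\alpha,\beta$ with $\frac{\varepsilon}{\mu_u-\mu_s-\varepsilon}\le\alpha,\beta<1$ and $\lambda_u=e^{-\mu_u+\varepsilon}$, $\lambda_s=e^{\mu_s+\varepsilon}$. Then for every $t\ge0$, $H(t)$ satisfies the (A)$(\alpha,\lambda_u^t)$ (B)$(\beta,\lambda_s^t)$ condition. Moreover, if $\alpha,\beta\in(\frac{\varepsilon}{\mu_u-\mu_s-\varepsilon},1)$ and $t\ge\epsilon_1>0$, then $H(t)$ satisfies (A)$(\alpha;k_\alpha\alpha,\lambda_u^t)$ (B)$(\beta;k_\beta\beta,\lambda_s^t)$, where $k_h=\frac{(\mu_u-\mu_s-\varepsilon-\frac{\varepsilon}{h})e^{-(\mu_u-\mu_s-\varepsilon)\epsilon_1}+\frac{\varepsilon}{h}}{\mu_u-\mu_s-\varepsilon}<1$,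 $h=\alpha,\beta$.
   Context: For $t\le0$ write $S(t)$ for the operator $S(-(-t))$ of the given semigroup, so $S(t-t_2)$, $S(t-s)$ make sense for $t\le t_2$, $t\le s$. For given $x_1\in X$, $y_2\in Y$ and $t_1\le t_2$ the displayed integral system has a unique continuous solution $(x(t),y(t))$ on $[t_1,t_2]$ with $x(t_1)=x_1$, $y(t_2)=y_2$. For $s\ge0$, the correspondence $H(s):X\times Y\to X\times Y$ is defined by: $(x_2,y_2)\in H(s)(x_1,y_1)$ iff there is a continuous $(x(t),y(t))$, $0\le t\le s$, satisfying the system with $t_1=0$, $t_2=s$, $(x(0),y(0))=(x_1,y_1)$, $(x(s),y(s))=(x_2,y_2)$. (A)(B) condition for a correspondence $H$ with graph in $(X\times Y)\times(X\times Y)$: (A)$(\alpha;\alpha',\lambda_u)$(B)$(\beta;\beta',\lambda_s)$ holds if for all $(x_1,y_1)\times(x_2,y_2),(x_1',y_1')\times(x_2',y_2')\in\mathrm{Graph}H$: $|x_1-x_1'|\le\alpha|y_1-y_1'|$ implies $|x_2-x_2'|\le\alpha'|y_2-y_2'|$ and $|y_1-y_1'|\le\lambda_u|y_2-y_2'|$; $|y_2-y_2'|\le\beta|x_2-x_2'|$ implies $|y_1-y_1'|\le\beta'|x_1-x_1'|$ and $|x_2-x_2'|\le\lambda_s|x_1-x_1'|$. (A)$(\alpha,\lambda_u)$(B)$(\beta,\lambda_s)$ means $\alpha'=\alpha$, $\beta'=\beta$. *)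

From Stdlib Require Import Reals Lra.
From Coquelicot Require Export Coquelicot.
Export Reals.
Open Scope R_scope.

Section Defs.
Context {X : CompleteNormedModule R_AbsRing}.

(* A C_0 semigroup (T(t))_{t>=0} of bounded linear operators on X
   (values at negative t are irrelevant). *)
Definition C0_semigroup (T : R -> X -> X) : Prop :=
  (forall t, 0 <= t -> forall x y, T t (plus x y) = plus (T t x) (T t y)) /\
  (forall t, 0 <= t -> forall (a : R) x, T t (scal a x) = scal a (T t x)) /\
  (forall t, 0 <= t -> exists M, forall x, norm (T t x) <= M * norm x) /\
  (forall x, T 0 x = x) /\
  (forall t s, 0 <= t -> 0 <= s -> forall x, T (t + s) x = T t (T s x)) /\
  (forall x, filterlim (fun t => T t x) (at_right 0) (locally x)).

End Defs.

Definition cont_on {V : UniformSpace} (a b : R) (f : R -> V) : Prop :=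
  forall t, a <= t <= b ->
    filterlim f (within (fun u => a <= u <= b) (locally t)) (locally (f t)).

Section System.
Context {X Y : CompleteNormedModule R_AbsRing}.
Variables (T : R -> X -> X)
          (U : R -> Y -> Y)   (* U t = S(-t), t >= 0 ; so S(t-s) = U (s-t) *)
          (B1 : X * Y -> X) (B2 : X * Y -> Y).

(* (x,y) is a solution on [t1,t2] of
   x(t) = T(t-t1)x1 + \int_{t1}^t T(t-s)B1(x(s),y(s)) ds,
   y(t) = S(t-t2)y2 - \int_t^{t2} S(t-s)B2(x(s),y(s)) ds. *)
Definition solves (t1 t2 : R) (x1 : X) (y2 : Y) (x : R -> X) (y : R -> Y) : Prop :=
  cont_on t1 t2 x /\ cont_on t1 t2 y /\
  forall t, t1 <= t <= t2 ->
    is_RInt (fun s => T (t - s) (B1 (x s, y s))) t1 t (minus (x t) (T (t - t1) x1)) /\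
    is_RInt (fun s => U (s - t) (B2 (x s, y s))) t t2 (minus (U (t2 - t) y2) (y t)).

Definition Hcorr (s : R) (p q : X * Y) : Prop :=
  exists (x : R -> X) (y : R -> Y),
    solves 0 s (fst p) (snd q) x y /\
    x 0 = fst p /\ y 0 = snd p /\ x s = fst q /\ y s = snd q.

End System.

Definition AB_cond {X Y : NormedModule R_AbsRing} (H : X * Y -> X * Y -> Prop)
    (alpha alpha' lu beta beta' ls : R) : Prop :=
  forall x1 y1 x2 y2 x1' y1' x2' y2',
    H (x1, y1) (x2, y2) -> H (x1', y1') (x2', y2') ->
    (norm (minus x1 x1') <= alpha * norm (minus y1 y1') ->
       norm (minus x2 x2') <= alpha' * norm (minus y2 y2') /\
       norm (minus y1 y1') <= lu * norm (minus y2 y2')) /\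
    (norm (minus y2 y2') <= beta * norm (minus x2 x2') ->
       norm (minus y1 y1') <= beta' * norm (minus x1 x1') /\
       norm (minus x2 x2') <= ls * norm (minus x1 x1')).

Definition kfac (mu_u mu_s eps eps1 h : R) : R :=
  ((mu_u - mu_s - eps - eps / h) * exp (- (mu_u - mu_s - eps) * eps1) + eps / h)
  / (mu_u - mu_s - eps).

(* For two solutions of the integral system on [0, t], variation of constants and the
   Lipschitz bounds show that a(s) = |x(s) - x'(s)| and b(s) = |y(s) - y'(s)| satisfy
     a(tau) <= e^(mu_s tau) a(0) + int_0^tau e^(mu_s (tau - s)) eps max(a, b)(s) ds,
     b(sg)  <= e^(-mu_u (t - sg)) b(t) + int_sg^t e^(-mu_u (s - sg)) eps max(a, b)(s) ds.
   Suppose a(0) <= alpha b(0) and let M be the maximum of max(a, b)(s) e^((mu_u - eps)(t - s))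
   on [0, t], attained at s0.  As eps / (mu_u - mu_s - eps) <= alpha, the first inequality
   gives a(s0) <= alpha M e^(-(mu_u - eps)(t - s0)); since alpha < 1, either M = 0 or b
   attains the maximum at s0, and then the second inequality gives M <= b(t).  Hence
   max(a, b)(s) <= e^(-(mu_u - eps)(t - s)) b(t): at s = 0 this is the expansion estimate
   for b, and inserted into the first inequality it gives a(t) <= c(t) b(t) with an
   explicit c(t) = cone_aperture t alpha that decreases from c(0) = alpha, so that
   c(t) <= k_alpha alpha once t >= eps1.
   The (B) half is the same argument after reversing time s |-> t - s, which exchanges the
   roles of a and b and of mu_s and -mu_u. *)

From Stdlib Require Import Reals Lra.
From Coquelicot Require Import Coquelicot.
Open Scope R_scope.

Lemma exp_le_compat x y : x <= y -> exp x <= exp y.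
Proof. intros [Hlt | ->]; [left; apply exp_increasing |]; lra. Qed.

Lemma Rpower_exp z t : Rpower (exp z) t = exp (z * t).
Proof. unfold Rpower. rewrite ln_exp. f_equal. ring. Qed.

Lemma continuous_of_ex_derive (f : R -> R) x : ex_derive f x -> continuous f x.
Proof. apply (ex_derive_continuous (K := R_AbsRing) (V := R_NormedModule)). Qed.

Lemma continuous_Rmax (f g : R -> R) x :
  continuous f x -> continuous g x -> continuous (fun y => Rmax (f y) (g y)) x.
Proof.
  intros Hf Hg.
  apply (continuous_ext (fun y => (f y + g y + Rabs (f y - g y)) * / 2)).
  { intros y. unfold Rmax. destruct Rle_dec.
    - rewrite Rabs_left1; lra.
    - rewrite Rabs_right; lra. }
  apply (continuous_mult (K := R_AbsRing)); [| apply continuous_const].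
  apply (continuous_plus (V := R_NormedModule));
    [apply (continuous_plus (V := R_NormedModule)); assumption |].
  apply continuous_Rabs_comp, (continuous_minus (V := R_NormedModule)); assumption.
Qed.

Lemma continuous_Rmin (f g : R -> R) x :
  continuous f x -> continuous g x -> continuous (fun y => Rmin (f y) (g y)) x.
Proof.
  intros Hf Hg.
  apply (continuous_ext (fun y => opp (Rmax (opp (f y)) (opp (g y))))).
  { intros y. unfold opp; simpl. unfold Rmax, Rmin. repeat destruct Rle_dec; lra. }
  apply (continuous_opp (V := R_NormedModule)), continuous_Rmax;
    apply (continuous_opp (V := R_NormedModule)); assumption.
Qed.

Lemma ex_RInt_exp_Rmax (k a b : R -> R) eps lo hi :
  (forall s, ex_derive k s) -> (forall s, continuous a s) -> (forall s, continuous b s) ->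
  ex_RInt (fun s => exp (k s) * (eps * Rmax (a s) (b s))) lo hi.
Proof.
  intros Hk Ha Hb. apply (ex_RInt_continuous (V := R_CompleteNormedModule)). intros z _.
  apply (continuous_mult (K := R_AbsRing)).
  - apply continuous_exp_comp, continuous_of_ex_derive, Hk.
  - apply (continuous_mult (K := R_AbsRing)); [apply continuous_const |].
    apply continuous_Rmax; auto.
Qed.

Lemma is_RInt_forward_kernel mu_s mu_u eps M tau t :
  mu_u - mu_s - eps <> 0 ->
  is_RInt (fun s => exp (mu_s * (tau - s)) * (eps * (M * exp (- (mu_u - eps) * (t - s))))) 0 tau
    (M * (eps / (mu_u - mu_s - eps)
          * (exp (- (mu_u - eps) * (t - tau)) - exp (mu_s * tau - (mu_u - eps) * t)))).
Proof.
  intros Hgap.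
  set (F := fun s => M * (eps / (mu_u - mu_s - eps))
                     * (exp (mu_s * (tau - s)) * exp (- (mu_u - eps) * (t - s)))).
  replace (M * _) with (minus (F tau) (F 0)).
  - apply (is_RInt_derive (V := R_CompleteNormedModule)).
    + intros s _. unfold F. auto_derive; [exact I |]. unfold Rminus. field. exact Hgap.
    + intros s _. apply continuous_of_ex_derive. auto_derive. exact I.
  - unfold F, minus, plus, opp; simpl.
    rewrite Rminus_diag, Rmult_0_r, exp_0, Rminus_0_r, Rminus_0_r, <- exp_plus.
    replace (mu_s * tau + - (mu_u - eps) * t) with (mu_s * tau - (mu_u - eps) * t) by ring.
    ring.
Qed.

Lemma is_RInt_backward_kernel mu_u eps M sg t :
  is_RInt (fun s => exp (- mu_u * (s - sg)) * (eps * (M * exp (- (mu_u - eps) * (t - s))))) sg t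
    (M * (exp (- (mu_u - eps) * (t - sg)) - exp (- mu_u * (t - sg)))).
Proof.
  set (F := fun s => - M * (exp (- mu_u * (s - sg)) * exp (- (mu_u - eps) * (t - s)))).
  replace (M * _) with (minus (F t) (F sg)).
  - apply (is_RInt_derive (V := R_CompleteNormedModule)).
    + intros s _. unfold F. auto_derive; [exact I |]. unfold Rminus. ring.
    + intros s _. apply continuous_of_ex_derive. auto_derive. exact I.
  - unfold F, minus, plus, opp; simpl.
    rewrite !Rminus_diag, !Rmult_0_r, exp_0. ring.
Qed.

Lemma RInt_reflect (g : R -> R) t lo hi :
  ex_RInt g lo hi -> RInt (fun s => g (t - s)) (t - hi) (t - lo) = RInt g lo hi.
Proof.
  intros [I HI]. rewrite (is_RInt_unique _ _ _ _ HI). apply is_RInt_unique.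
  apply is_RInt_swap in HI.
  replace hi with (-1 * (t - hi) + t) in HI by ring.
  replace lo with (-1 * (t - lo) + t) in HI by ring.
  apply (is_RInt_comp_lin (V := R_NormedModule)), (is_RInt_scal _ _ _ (-1)) in HI.
  apply (is_RInt_ext _ (fun s => g (t - s))) in HI.
  - replace I with (scal (-1) (opp I)); [exact HI |].
    unfold scal, opp; simpl. unfold mult; simpl. ring.
  - intros s _. unfold scal; simpl. unfold mult; simpl.
    replace (-1 * s + t) with (t - s) by ring. ring.
Qed.

Definition gronwall_pair (mu_s mu_u eps t : R) (a b : R -> R) : Prop :=
  (forall tau, 0 <= tau <= t ->
     a tau <= exp (mu_s * tau) * a 0
              + RInt (fun s => exp (mu_s * (tau - s)) * (eps * Rmax (a s) (b s))) 0 tau) /\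
  (forall sg, 0 <= sg <= t ->
     b sg <= exp (- mu_u * (t - sg)) * b t
             + RInt (fun s => exp (- mu_u * (s - sg)) * (eps * Rmax (a s) (b s))) sg t).

Lemma gronwall_pair_reverse mu_s mu_u eps t a b :
  (forall s, continuous a s) -> (forall s, continuous b s) ->
  gronwall_pair mu_s mu_u eps t a b ->
  gronwall_pair (- mu_u) (- mu_s) eps t (fun r => b (t - r)) (fun r => a (t - r)).
Proof.
  intros Ha Hb [Hfw Hbw]. split; cbv beta.
  - intros tau Htau. rewrite Rminus_0_r.
    eapply Rle_trans; [apply Hbw; lra |]. right.
    replace (t - (t - tau)) with tau by ring. f_equal.
    rewrite <- (RInt_reflect _ t).
    + replace (t - t) with 0 by ring. replace (t - (t - tau)) with tau by ring.
      apply RInt_ext. intros s _. rewrite Rmax_comm. do 2 f_equal. ring.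
    + apply ex_RInt_exp_Rmax; auto. intros s. auto_derive. exact I.
  - intros sg Hsg. rewrite Rminus_diag.
    eapply Rle_trans; [apply Hfw; lra |]. right.
    replace (- - mu_s * (t - sg)) with (mu_s * (t - sg)) by ring. f_equal.
    rewrite <- (RInt_reflect _ t).
    + replace (t - (t - sg)) with sg by ring. rewrite Rminus_0_r.
      apply RInt_ext. intros s _. rewrite Rmax_comm. do 2 f_equal. ring.
    + apply ex_RInt_exp_Rmax; auto. intros s. auto_derive. exact I.
Qed.

Definition cone_aperture (mu_u mu_s eps t h : R) : R :=
  ((h * (mu_u - mu_s - eps) - eps) * exp (- (mu_u - mu_s - eps) * t) + eps)
  / (mu_u - mu_s - eps).

Definition envelope (mu_u eps t : R) (a b : R -> R) (M : R) : Prop :=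
  forall s, 0 <= s <= t -> Rmax (a s) (b s) <= M * exp (- (mu_u - eps) * (t - s)).

Section ConeForward.

Variables (mu_s mu_u eps al t : R) (a b : R -> R).
Hypothesis eps_ge0 : 0 <= eps.
Hypothesis gap_pos : 0 < mu_u - mu_s - eps.
Hypothesis al_ge : eps <= al * (mu_u - mu_s - eps).
Hypothesis al_lt1 : al < 1.
Hypothesis t_ge0 : 0 <= t.
Hypothesis a_cont : forall s, continuous a s.
Hypothesis b_cont : forall s, continuous b s.
Hypothesis b_ge0 : forall s, 0 <= b s.
Hypothesis ab_system : gronwall_pair mu_s mu_u eps t a b.
Hypothesis cone_at0 : a 0 <= al * b 0.

Lemma al_ge0 : 0 <= al.
Proof. nra. Qed.

Lemma a_le_of_envelope M : envelope mu_u eps t a b M -> forall tau, 0 <= tau <= t ->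
  a tau <= M * (al * exp (mu_s * tau - (mu_u - eps) * t)
                + eps / (mu_u - mu_s - eps)
                  * (exp (- (mu_u - eps) * (t - tau)) - exp (mu_s * tau - (mu_u - eps) * t))).
Proof.
  intros HM tau Htau.
  assert (a0_le : a 0 <= al * (M * exp (- (mu_u - eps) * t))).
  { eapply Rle_trans; [exact cone_at0 |]. apply Rmult_le_compat_l; [exact al_ge0 |].
    rewrite <- (Rminus_0_r t). eapply Rle_trans; [apply Rmax_r | apply HM; lra]. }
  assert (int_le : RInt (fun s => exp (mu_s * (tau - s)) * (eps * Rmax (a s) (b s))) 0 tau
      <= M * (eps / (mu_u - mu_s - eps)
              * (exp (- (mu_u - eps) * (t - tau)) - exp (mu_s * tau - (mu_u - eps) * t)))).
  { eapply (is_RInt_le _ _ 0 tau); [lra | | apply is_RInt_forward_kernel, Rgt_not_eq, gap_pos |].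
    - apply (RInt_correct (V := R_CompleteNormedModule)), ex_RInt_exp_Rmax; auto.
      intros s. auto_derive. exact I.
    - intros s Hs. apply Rmult_le_compat_l; [apply Rlt_le, exp_pos |].
      apply Rmult_le_compat_l; [exact eps_ge0 | apply HM; lra]. }
  assert (a0_term : exp (mu_s * tau) * a 0 <= M * (al * exp (mu_s * tau - (mu_u - eps) * t))).
  { replace (mu_s * tau - (mu_u - eps) * t) with (mu_s * tau + - (mu_u - eps) * t) by ring.
    rewrite exp_plus.
    replace (M * (al * (exp (mu_s * tau) * exp (- (mu_u - eps) * t))))
      with (exp (mu_s * tau) * (al * (M * exp (- (mu_u - eps) * t)))) by ring.
    apply Rmult_le_compat_l; [apply Rlt_le, exp_pos | exact a0_le]. }
  destruct ab_system as [a_ineq _].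
  specialize (a_ineq tau Htau). lra.
Qed.

Lemma a_le_envelope M :
  0 <= M -> envelope mu_u eps t a b M -> forall tau, 0 <= tau <= t ->
  a tau <= al * (M * exp (- (mu_u - eps) * (t - tau))).
Proof.
  intros M_ge0 HM tau Htau.
  eapply Rle_trans; [exact (a_le_of_envelope M HM tau Htau) |].
  set (P := exp (mu_s * tau - (mu_u - eps) * t)).
  set (Q := exp (- (mu_u - eps) * (t - tau))).
  assert (P_le_Q : P <= Q) by (apply exp_le_compat; nra).
  assert (ratio_le : eps / (mu_u - mu_s - eps) <= al) by (apply Rle_div_l; lra).
  assert (0 <= M * (al - eps / (mu_u - mu_s - eps)) * (Q - P))
    by (apply Rmult_le_pos; [apply Rmult_le_pos |]; lra).
  nra.
Qed.

Lemma b_le_of_envelope M : envelope mu_u eps t a b M -> forall sg, 0 <= sg <= t ->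
  b sg <= exp (- mu_u * (t - sg)) * b t
          + M * (exp (- (mu_u - eps) * (t - sg)) - exp (- mu_u * (t - sg))).
Proof.
  intros HM sg Hsg.
  destruct ab_system as [_ b_ineq].
  eapply Rle_trans; [apply b_ineq, Hsg |]. apply Rplus_le_compat_l.
  eapply (is_RInt_le _ _ sg t); [lra | | apply is_RInt_backward_kernel |].
  - apply (RInt_correct (V := R_CompleteNormedModule)), ex_RInt_exp_Rmax; auto.
    intros s. auto_derive. exact I.
  - intros s Hs. apply Rmult_le_compat_l; [apply Rlt_le, exp_pos |].
    apply Rmult_le_compat_l; [exact eps_ge0 | apply HM; lra].
Qed.

Lemma envelope_at_t : envelope mu_u eps t a b (b t).
Proof.
  set (w := fun s => Rmax (a s) (b s) * exp ((mu_u - eps) * (t - s))).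
  assert (w_cont : forall s, 0 <= s <= t -> continuity_pt w s).
  { intros s _. apply continuity_pt_filterlim.
    apply (continuous_mult (K := R_AbsRing)); [apply continuous_Rmax; auto |].
    apply continuous_exp_comp, continuous_of_ex_derive.
    auto_derive. exact I. }
  destruct (continuity_ab_maj w 0 t t_ge0 w_cont) as [s0 [w_le Hs0]].
  set (M := w s0).
  assert (w_split : forall s, Rmax (a s) (b s) = w s * exp (- (mu_u - eps) * (t - s))).
  { intros s. unfold w. rewrite Rmult_assoc, <- exp_plus.
    replace (_ + _) with 0 by ring. rewrite exp_0. ring. }
  assert (HM : envelope mu_u eps t a b M).
  { intros s Hs. rewrite w_split.
    apply Rmult_le_compat_r; [apply Rlt_le, exp_pos | apply w_le, Hs]. }
  assert (M_ge0 : 0 <= M).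
  { apply Rmult_le_pos; [| apply Rlt_le, exp_pos].
    eapply Rle_trans; [apply b_ge0 | apply Rmax_r]. }
  assert (E_pos : 0 < exp (- (mu_u - eps) * (t - s0))) by apply exp_pos.
  assert (at_s0 := w_split s0). fold M in at_s0.
  assert (M_le : M <= b t).
  { destruct (Rle_dec (a s0) (b s0)) as [ab | ba].
    - assert (Hb := b_le_of_envelope M HM s0 Hs0).
      rewrite Rmax_right in at_s0 by exact ab.
      assert (0 < exp (- mu_u * (t - s0))) by apply exp_pos.
      nra.
    - assert (Ha := a_le_envelope M M_ge0 HM s0 Hs0).
      rewrite Rmax_left in at_s0 by lra.
      assert (M * exp (- (mu_u - eps) * (t - s0)) <= 0).
      { apply (Rmult_le_reg_l (1 - al)); lra. }
      specialize (b_ge0 t). nra. }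
  intros s Hs. eapply Rle_trans; [apply HM, Hs |].
  apply Rmult_le_compat_r; [apply Rlt_le, exp_pos | exact M_le].
Qed.

Lemma cone_forward :
  a t <= cone_aperture mu_u mu_s eps t al * b t /\ b 0 <= exp ((- mu_u + eps) * t) * b t.
Proof.
  split.
  - eapply Rle_trans; [exact (a_le_of_envelope _ envelope_at_t t (conj t_ge0 (Rle_refl t))) |].
    right. unfold cone_aperture.
    replace (mu_s * t - (mu_u - eps) * t) with (- (mu_u - mu_s - eps) * t) by ring.
    rewrite Rminus_diag, Rmult_0_r, exp_0. field. lra.
  - eapply Rle_trans; [apply Rmax_r |]. eapply Rle_trans; [apply envelope_at_t; lra |].
    right. rewrite Rmult_comm. do 2 f_equal. ring.
Qed.

End ConeForward.

Lemma continuous_reflect (f : R -> R) t r :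
  (forall s, continuous f s) -> continuous (fun r => f (t - r)) r.
Proof.
  intros Hf. apply (continuous_comp (fun r => t - r) f); [| apply Hf].
  apply continuous_of_ex_derive. auto_derive. exact I.
Qed.

Lemma cone_backward mu_s mu_u eps be t a b :
  0 <= eps -> 0 < mu_u - mu_s - eps -> eps <= be * (mu_u - mu_s - eps) -> be < 1 -> 0 <= t ->
  (forall s, continuous a s) -> (forall s, continuous b s) -> (forall s, 0 <= a s) ->
  gronwall_pair mu_s mu_u eps t a b -> b t <= be * a t ->
  b 0 <= cone_aperture mu_u mu_s eps t be * a 0 /\ a t <= exp ((mu_s + eps) * t) * a 0.
Proof.
  intros eps_ge0 gap_pos be_ge be_lt1 t_ge0 a_cont b_cont a_ge0 ab_system cone_at_t.
  replace (cone_aperture mu_u mu_s eps t be) with (cone_aperture (- mu_s) (- mu_u) eps t be)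
    by (unfold cone_aperture; replace (- mu_s - - mu_u - eps) with (mu_u - mu_s - eps) by ring;
        reflexivity).
  replace ((mu_s + eps) * t) with ((- - mu_s + eps) * t) by ring.
  assert (reversed := cone_forward (- mu_u) (- mu_s) eps be t
                        (fun r => b (t - r)) (fun r => a (t - r))).
  cbv beta in reversed. rewrite Rminus_diag, Rminus_0_r in reversed.
  apply reversed; try lra.
  - intros s. apply continuous_reflect, b_cont.
  - intros s. apply continuous_reflect, a_cont.
  - intros s. apply a_ge0.
  - apply gronwall_pair_reverse; assumption.
Qed.

Lemma minus_regroup {G : AbelianGroup} (x x' v v' : G) :
  minus x x' = plus (minus v v') (minus (minus x v) (minus x' v')).
Proof.
  unfold minus. rewrite (opp_plus x'), opp_opp.
  rewrite (plus_comm (plus v _)), <- !plus_assoc.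
  rewrite (plus_comm v), (plus_assoc v'), plus_opp_r, plus_zero_l.
  rewrite (plus_comm (opp x')), (plus_assoc (opp v)), plus_opp_l, plus_zero_l.
  reflexivity.
Qed.

Lemma minus_opp {G : AbelianGroup} (x y : G) : minus (opp x) (opp y) = minus y x.
Proof. unfold minus. rewrite opp_opp. apply plus_comm. Qed.

Lemma norm_minus_le_add {V : NormedModule R_AbsRing} (x x' v v' : V) :
  norm (minus x x') <= norm (minus v v') + norm (minus (minus x v) (minus x' v')).
Proof. rewrite (minus_regroup x x' v v'). apply norm_triangle. Qed.

Lemma norm_minus_le_sub {V : NormedModule R_AbsRing} (x x' v v' : V) :
  norm (minus v v') <= norm (minus x x') + norm (minus (minus x v) (minus x' v')).
Proof.
  eapply Rle_trans; [apply (norm_minus_le_add v v' x x') |].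
  rewrite <- (opp_minus x v), <- (opp_minus x' v'), minus_opp, <- (opp_minus (minus x v)), norm_opp.
  apply Rle_refl.
Qed.

Lemma norm_minus_is_RInt_le {V : NormedModule R_AbsRing} (F F' : R -> V) (g : R -> R)
    lo hi I I' :
  lo <= hi -> is_RInt F lo hi I -> is_RInt F' lo hi I' -> ex_RInt g lo hi ->
  (forall s, lo <= s <= hi -> norm (minus (F s) (F' s)) <= g s) ->
  norm (minus I I') <= RInt g lo hi.
Proof.
  intros Hlo HI HI' Hg Hle.
  apply (norm_RInt_le (fun s => minus (F s) (F' s)) g lo hi); try assumption.
  - apply is_RInt_minus; assumption.
  - apply (RInt_correct (V := R_CompleteNormedModule)), Hg.
Qed.

Lemma semigroup_minus {V : CompleteNormedModule R_AbsRing} (T : R -> V -> V) s u v :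
  C0_semigroup T -> 0 <= s -> T s (minus u v) = minus (T s u) (T s v).
Proof.
  intros [T_plus [T_scal _]] Hs. unfold minus.
  rewrite T_plus by exact Hs. f_equal.
  assert (scal_m1 : forall w : V, scal (opp (one : R_AbsRing)) w = opp w)
    by exact (@scal_opp_one _ (CompleteNormedModule.ModuleSpace R_AbsRing V)).
  rewrite <- !scal_m1. apply T_scal, Hs.
Qed.

Lemma norm_minus_semigroup_le {V : CompleteNormedModule R_AbsRing} (T : R -> V -> V) mu s u v :
  C0_semigroup T -> (forall t w, 0 <= t -> norm (T t w) <= exp (mu * t) * norm w) -> 0 <= s ->
  norm (minus (T s u) (T s v)) <= exp (mu * s) * norm (minus u v).
Proof. intros HT Hbound Hs. rewrite <- semigroup_minus by assumption. apply Hbound, Hs. Qed.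

Definition clamp (t s : R) : R := Rmax 0 (Rmin t s).

Lemma clamp_bounds t s : 0 <= t -> 0 <= clamp t s <= t.
Proof. intros Ht. unfold clamp, Rmax, Rmin. repeat destruct Rle_dec; lra. Qed.

Lemma clamp_id t s : 0 <= s <= t -> clamp t s = s.
Proof. intros Hs. unfold clamp, Rmax, Rmin. repeat destruct Rle_dec; lra. Qed.

Lemma continuous_clamp t s : continuous (clamp t) s.
Proof.
  apply continuous_Rmax; [apply continuous_const |].
  apply continuous_Rmin; [apply continuous_const | apply continuous_id].
Qed.

Lemma continuous_comp_clamp {V : UniformSpace} (f : R -> V) t s :
  0 <= t -> cont_on 0 t f -> continuous (fun s => f (clamp t s)) s.
Proof.
  intros Ht Hf.
  apply (filterlim_comp _ _ _ (clamp t) f _ (within (fun u => 0 <= u <= t) (locally (clamp t s)))).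
  - intros P HP. apply (continuous_clamp t s) in HP. unfold filtermap in *.
    apply (filter_imp (fun z => 0 <= clamp t z <= t -> P (clamp t z))); [| exact HP].
    intros z Hz. apply Hz, clamp_bounds, Ht.
  - apply Hf, clamp_bounds, Ht.
Qed.

(* Freezing the arguments outside [0, t] makes the distance continuous on all of [R]. *)
Definition dist_on {V : NormedModule R_AbsRing} (t : R) (f g : R -> V) (s : R) : R :=
  norm (minus (f (clamp t s)) (g (clamp t s))).

Lemma dist_on_id {V : NormedModule R_AbsRing} t (f g : R -> V) s :
  0 <= s <= t -> dist_on t f g s = norm (minus (f s) (g s)).
Proof. intros Hs. unfold dist_on. rewrite clamp_id by exact Hs. reflexivity. Qed.

Lemma continuous_dist_on {V : NormedModule R_AbsRing} t (f g : R -> V) s :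
  0 <= t -> cont_on 0 t f -> cont_on 0 t g -> continuous (dist_on t f g) s.
Proof.
  intros Ht Hf Hg. unfold dist_on.
  apply (continuous_comp (fun s => minus (f (clamp t s)) (g (clamp t s))) norm).
  - apply continuous_minus; apply continuous_comp_clamp; assumption.
  - apply filterlim_norm.
Qed.

Section SolutionDistance.

Context {X Y : CompleteNormedModule R_AbsRing}.
Variables (T : R -> X -> X) (U : R -> Y -> Y) (B1 : X * Y -> X) (B2 : X * Y -> Y).
Variables (mu_s mu_u eps : R).
Hypothesis T_semigroup : C0_semigroup T.
Hypothesis U_semigroup : C0_semigroup U.
Hypothesis T_bound : forall t x, 0 <= t -> norm (T t x) <= exp (mu_s * t) * norm x.
Hypothesis U_bound : forall t y, 0 <= t -> norm (U t y) <= exp (- mu_u * t) * norm y.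
Hypothesis B1_lip : forall p q : X * Y, norm (minus (B1 p) (B1 q)) <=
  eps * Rmax (norm (minus (fst p) (fst q))) (norm (minus (snd p) (snd q))).
Hypothesis B2_lip : forall p q : X * Y, norm (minus (B2 p) (B2 q)) <=
  eps * Rmax (norm (minus (fst p) (fst q))) (norm (minus (snd p) (snd q))).

Variables (t : R) (x1 x1' : X) (y2 y2' : Y) (x x' : R -> X) (y y' : R -> Y).
Hypothesis t_ge0 : 0 <= t.
Hypothesis sol : solves T U B1 B2 0 t x1 y2 x y.
Hypothesis sol' : solves T U B1 B2 0 t x1' y2' x' y'.
Hypothesis x_at0 : x 0 = x1.
Hypothesis x'_at0 : x' 0 = x1'.
Hypothesis y_at_t : y t = y2.
Hypothesis y'_at_t : y' t = y2'.

Lemma continuous_dist_x s : continuous (dist_on t x x') s.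
Proof. apply continuous_dist_on; [exact t_ge0 | exact (proj1 sol) | exact (proj1 sol')]. Qed.

Lemma continuous_dist_y s : continuous (dist_on t y y') s.
Proof.
  apply continuous_dist_on; [exact t_ge0 | exact (proj1 (proj2 sol)) | exact (proj1 (proj2 sol'))].
Qed.

Lemma ex_RInt_dist (k : R -> R) lo hi :
  (forall s, ex_derive k s) ->
  ex_RInt (fun s => exp (k s) * (eps * Rmax (dist_on t x x' s) (dist_on t y y' s))) lo hi.
Proof.
  intros Hk. apply ex_RInt_exp_Rmax; [exact Hk | apply continuous_dist_x | apply continuous_dist_y].
Qed.

Lemma semigroup_nonlinearity_le {Z : CompleteNormedModule R_AbsRing} (S : R -> Z -> Z) mu
    (B : X * Y -> Z) r s :
  C0_semigroup S -> (forall t z, 0 <= t -> norm (S t z) <= exp (mu * t) * norm z) ->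
  (forall p q : X * Y, norm (minus (B p) (B q)) <=
     eps * Rmax (norm (minus (fst p) (fst q))) (norm (minus (snd p) (snd q)))) ->
  0 <= r -> 0 <= s <= t ->
  norm (minus (S r (B (x s, y s))) (S r (B (x' s, y' s))))
  <= exp (mu * r) * (eps * Rmax (dist_on t x x' s) (dist_on t y y' s)).
Proof.
  intros HS S_bound B_lip Hr Hs.
  eapply Rle_trans; [apply (norm_minus_semigroup_le S mu); assumption |].
  apply Rmult_le_compat_l; [apply Rlt_le, exp_pos |].
  rewrite !dist_on_id by exact Hs. apply B_lip.
Qed.

Lemma gronwall_pair_dist :
  gronwall_pair mu_s mu_u eps t (dist_on t x x') (dist_on t y y').
Proof.
  split.
  - intros tau Htau.
    destruct (proj2 (proj2 sol) tau Htau) as [Ix _].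
    destruct (proj2 (proj2 sol') tau Htau) as [Ix' _].
    rewrite (dist_on_id t x x' tau Htau), (dist_on_id t x x' 0), x_at0, x'_at0 by lra.
    eapply Rle_trans; [apply (norm_minus_le_add _ _ (T (tau - 0) x1) (T (tau - 0) x1')) |].
    apply Rplus_le_compat.
    + rewrite Rminus_0_r. apply (norm_minus_semigroup_le T); [assumption | assumption | lra].
    + apply (norm_minus_is_RInt_le _ _ _ 0 tau _ _ (proj1 Htau) Ix Ix').
      * apply ex_RInt_dist. intros s. auto_derive. exact I.
      * intros s Hs. apply semigroup_nonlinearity_le; assumption || lra.
  - intros sg Hsg.
    destruct (proj2 (proj2 sol) sg Hsg) as [_ Iy].
    destruct (proj2 (proj2 sol') sg Hsg) as [_ Iy'].
    rewrite (dist_on_id t y y' sg Hsg), (dist_on_id t y y' t), y_at_t, y'_at_t by lra.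
    eapply Rle_trans; [apply (norm_minus_le_sub (U (t - sg) y2) (U (t - sg) y2')) |].
    apply Rplus_le_compat.
    + apply (norm_minus_semigroup_le U); [assumption | assumption | lra].
    + apply (norm_minus_is_RInt_le _ _ _ sg t _ _ (proj2 Hsg) Iy Iy').
      * apply ex_RInt_dist. intros s. auto_derive. exact I.
      * intros s Hs. apply semigroup_nonlinearity_le; assumption || lra.
Qed.

End SolutionDistance.

Lemma cone_aperture_0 mu_u mu_s eps h :
  mu_u - mu_s - eps <> 0 -> cone_aperture mu_u mu_s eps 0 h = h.
Proof. intros Hgap. unfold cone_aperture. rewrite Rmult_0_r, exp_0. field. exact Hgap. Qed.

Lemma cone_aperture_antitone mu_u mu_s eps h t1 t2 :
  0 < mu_u - mu_s - eps -> eps <= h * (mu_u - mu_s - eps) -> t1 <= t2 ->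
  cone_aperture mu_u mu_s eps t2 h <= cone_aperture mu_u mu_s eps t1 h.
Proof.
  intros Hgap Hh Ht. unfold cone_aperture, Rdiv.
  apply Rmult_le_compat_r; [apply Rlt_le, Rinv_0_lt_compat, Hgap |].
  apply Rplus_le_compat_r, Rmult_le_compat_l; [lra |].
  apply exp_le_compat. nra.
Qed.

Lemma cone_aperture_le mu_u mu_s eps h t :
  0 < mu_u - mu_s - eps -> eps <= h * (mu_u - mu_s - eps) -> 0 <= t ->
  cone_aperture mu_u mu_s eps t h <= h.
Proof.
  intros Hgap Hh Ht. rewrite <- (cone_aperture_0 mu_u mu_s eps h) at 2 by lra.
  apply cone_aperture_antitone; assumption.
Qed.

Lemma cone_aperture_lt mu_u mu_s eps h t :
  0 < mu_u - mu_s - eps -> eps < h * (mu_u - mu_s - eps) -> 0 < t ->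
  cone_aperture mu_u mu_s eps t h < h.
Proof.
  intros Hgap Hh Ht. unfold cone_aperture.
  apply Rlt_div_l; [exact Hgap |].
  assert (exp (- (mu_u - mu_s - eps) * t) < 1) by (rewrite <- exp_0; apply exp_increasing; nra).
  nra.
Qed.

Lemma kfac_mul mu_u mu_s eps eps1 h :
  mu_u - mu_s - eps <> 0 -> h <> 0 ->
  kfac mu_u mu_s eps eps1 h * h = cone_aperture mu_u mu_s eps eps1 h.
Proof. intros Hgap Hh. unfold kfac, cone_aperture. field. split; assumption. Qed.

Lemma kfac_lt_1 mu_u mu_s eps eps1 h :
  0 < mu_u - mu_s - eps -> eps < h * (mu_u - mu_s - eps) -> 0 < h -> 0 < eps1 ->
  kfac mu_u mu_s eps eps1 h < 1.
Proof.
  intros Hgap Hh h_pos eps1_pos.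
  apply (Rmult_lt_reg_r h); [exact h_pos |].
  rewrite kfac_mul, Rmult_1_l by lra. apply cone_aperture_lt; assumption.
Qed.

Lemma AB_cond_weaken {X Y : NormedModule R_AbsRing} (H : X * Y -> X * Y -> Prop)
    al al' al'' lu be be' be'' ls :
  al' <= al'' -> be' <= be'' -> AB_cond H al al' lu be be' ls -> AB_cond H al al'' lu be be'' ls.
Proof.
  intros Hal Hbe HAB x1 y1 x2 y2 x1' y1' x2' y2' H1 H2.
  destruct (HAB x1 y1 x2 y2 x1' y1' x2' y2' H1 H2) as [HA HB].
  split; intros Hcone.
  - destruct (HA Hcone) as [Hx Hy]. split; [| exact Hy].
    eapply Rle_trans; [exact Hx | apply Rmult_le_compat_r; [apply norm_ge_0 | exact Hal]].
  - destruct (HB Hcone) as [Hy Hx]. split; [| exact Hx].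
    eapply Rle_trans; [exact Hy | apply Rmult_le_compat_r; [apply norm_ge_0 | exact Hbe]].
Qed.

Lemma Hcorr_AB_cond (X Y : CompleteNormedModule R_AbsRing) (T : R -> X -> X) (U : R -> Y -> Y)
    (mu_s mu_u eps : R) (B1 : X * Y -> X) (B2 : X * Y -> Y) (alpha beta t : R) :
  C0_semigroup T -> C0_semigroup U ->
  (forall t x, 0 <= t -> norm (T t x) <= exp (mu_s * t) * norm x) ->
  (forall t y, 0 <= t -> norm (U t y) <= exp (- mu_u * t) * norm y) ->
  0 <= eps ->
  (forall p q : X * Y, norm (minus (B1 p) (B1 q)) <=
       eps * Rmax (norm (minus (fst p) (fst q))) (norm (minus (snd p) (snd q)))) ->
  (forall p q : X * Y, norm (minus (B2 p) (B2 q)) <=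
       eps * Rmax (norm (minus (fst p) (fst q))) (norm (minus (snd p) (snd q)))) ->
  0 < mu_u - mu_s - eps ->
  eps <= alpha * (mu_u - mu_s - eps) -> alpha < 1 ->
  eps <= beta * (mu_u - mu_s - eps) -> beta < 1 ->
  0 <= t ->
  AB_cond (Hcorr T U B1 B2 t)
    alpha (cone_aperture mu_u mu_s eps t alpha) (exp ((- mu_u + eps) * t))
    beta (cone_aperture mu_u mu_s eps t beta) (exp ((mu_s + eps) * t)).
Proof.
  intros CT CU HT HU eps_ge0 L1 L2 gap_pos al_ge al_lt1 be_ge be_lt1 t_ge0
    x1 y1 x2 y2 x1' y1' x2' y2'
    [x [y [sol [x_at0 [y_at0 [x_at_t y_at_t]]]]]]
    [x' [y' [sol' [x'_at0 [y'_at0 [x'_at_t y'_at_t]]]]]].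
  simpl in *.
  assert (system : gronwall_pair mu_s mu_u eps t (dist_on t x x') (dist_on t y y'))
    by (eapply gronwall_pair_dist; eassumption).
  assert (a_cont : forall s, continuous (dist_on t x x') s)
    by (intros s; eapply continuous_dist_x; eassumption).
  assert (b_cont : forall s, continuous (dist_on t y y') s)
    by (intros s; eapply continuous_dist_y; eassumption).
  assert (d_x0 : dist_on t x x' 0 = norm (minus x1 x1'))
    by (rewrite dist_on_id, x_at0, x'_at0 by lra; reflexivity).
  assert (d_y0 : dist_on t y y' 0 = norm (minus y1 y1'))
    by (rewrite dist_on_id, y_at0, y'_at0 by lra; reflexivity).
  assert (d_xt : dist_on t x x' t = norm (minus x2 x2'))
    by (rewrite dist_on_id, x_at_t, x'_at_t by lra; reflexivity).
  assert (d_yt : dist_on t y y' t = norm (minus y2 y2'))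
    by (rewrite dist_on_id, y_at_t, y'_at_t by lra; reflexivity).
  assert (a_ge0 : forall s, 0 <= dist_on t x x' s) by (intros s; apply norm_ge_0).
  assert (b_ge0 : forall s, 0 <= dist_on t y y' s) by (intros s; apply norm_ge_0).
  split; intros cone.
  - destruct (cone_forward mu_s mu_u eps alpha t (dist_on t x x') (dist_on t y y'))
      as [Hx Hy]; try assumption.
    + rewrite d_x0, d_y0. exact cone.
    + rewrite d_xt, d_yt in Hx. rewrite d_y0, d_yt in Hy. split; assumption.
  - destruct (cone_backward mu_s mu_u eps beta t (dist_on t x x') (dist_on t y y'))
      as [Hy Hx]; try assumption.
    + rewrite d_xt, d_yt. exact cone.
    + rewrite d_y0, d_x0 in Hy. rewrite d_xt, d_x0 in Hx. split; assumption.
Qed.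

Theorem lemma3p4 (X Y : CompleteNormedModule R_AbsRing)
  (T : R -> X -> X) (U : R -> Y -> Y) (* U t = S(-t) *)
  (mu_s mu_u eps : R)
  (B1 : X * Y -> X) (B2 : X * Y -> Y) (alpha beta : R) :
  C0_semigroup T -> C0_semigroup U ->
  (forall t x, 0 <= t -> norm (T t x) <= exp (mu_s * t) * norm x) ->
  (forall t y, 0 <= t -> norm (U t y) <= exp (- mu_u * t) * norm y) ->
  0 <= eps ->
  (forall p q : X * Y, norm (minus (B1 p) (B1 q)) <=
       eps * Rmax (norm (minus (fst p) (fst q))) (norm (minus (snd p) (snd q)))) ->
  (forall p q : X * Y, norm (minus (B2 p) (B2 q)) <=
       eps * Rmax (norm (minus (fst p) (fst q))) (norm (minus (snd p) (snd q)))) ->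
  mu_u - mu_s - 2 * eps > 0 ->
  eps / (mu_u - mu_s - eps) <= alpha < 1 ->
  eps / (mu_u - mu_s - eps) <= beta < 1 ->
  (forall t, 0 <= t ->
     AB_cond (Hcorr T U B1 B2 t) alpha alpha (Rpower (exp (- mu_u + eps)) t)
                                 beta beta (Rpower (exp (mu_s + eps)) t)) /\
  (eps / (mu_u - mu_s - eps) < alpha -> eps / (mu_u - mu_s - eps) < beta ->
   forall eps1 t, 0 < eps1 -> eps1 <= t ->
     AB_cond (Hcorr T U B1 B2 t)
        alpha (kfac mu_u mu_s eps eps1 alpha * alpha) (Rpower (exp (- mu_u + eps)) t)
        beta (kfac mu_u mu_s eps eps1 beta * beta) (Rpower (exp (mu_s + eps)) t) /\
     kfac mu_u mu_s eps eps1 alpha < 1 /\ kfac mu_u mu_s eps eps1 beta < 1).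
Proof.
  intros CT CU HT HU eps_ge0 L1 L2 gap [al_lo al_lt1] [be_lo be_lt1].
  assert (gap_pos : 0 < mu_u - mu_s - eps) by lra.
  apply Rle_div_l in al_lo, be_lo; try exact gap_pos.
  assert (AB := Hcorr_AB_cond X Y T U mu_s mu_u eps B1 B2 alpha beta).
  split.
  - intros t Ht. rewrite !Rpower_exp.
    apply (AB_cond_weaken _ _ (cone_aperture mu_u mu_s eps t alpha) _ _ _
             (cone_aperture mu_u mu_s eps t beta)).
    + apply cone_aperture_le; assumption.
    + apply cone_aperture_le; assumption.
    + apply AB; assumption.
  - intros al_gt be_gt eps1 t eps1_pos eps1_le. rewrite !Rpower_exp.
    apply Rlt_div_l in al_gt, be_gt; try exact gap_pos.
    assert (al_pos : 0 < alpha) by nra. assert (be_pos : 0 < beta) by nra.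
    split; [| split; apply kfac_lt_1; lra].
    rewrite !kfac_mul by lra.
    apply (AB_cond_weaken _ _ (cone_aperture mu_u mu_s eps t alpha) _ _ _
             (cone_aperture mu_u mu_s eps t beta)).
    + apply cone_aperture_antitone; assumption.
    + apply cone_aperture_antitone; assumption.
    + apply AB; try assumption; lra.
Qed.
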